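(* Let $m>1$ be an integer and $k>1$ an odd integer. Then there exists a number $c$ such that for every integer base $b\ge c$, the number $[m\cdot(b-1)]^k$ is antipalindromic in base $b$. Moreover, one may take $c=\binom{k}{\frac{k-1}{2}}\cdot m^k$.
   Context: For an integer $b\ge 2$, every natural number $x$ has a unique base-$b$ expansion $x=a_\ell b^\ell+\dots+a_1b+a_0$ with $a_0,\dots,a_\ell\in\{0,1,\dots,b-1\}$ and $a_\ell\neq 0$. The number $x$ is antipalindromic in base $b$ if $a_j=b-1-a_{\ell-j}$ for all $j\in\{0,1,\dots,\ell\}$. *)

From mathcomp Require Import all_boot.
Set Implicit Arguments. Unset Strict Implicit. Unset Printing Implicit Defensive.

(* s is the base-b expansion of x: s = [:: a_0; a_1; ...; a_l] (least significant
   digit first), all digits < b, leading digit a_l <> 0, x = \sum_j a_j b^j.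
   For b >= 2 this expansion exists and is unique for x > 0. *)
Definition base_expansion (b x : nat) (s : seq nat) : Prop :=
  [/\ 0 < size s,
      all (fun a => a < b) s,
      nth 0 s (size s).-1 != 0
    & x = \sum_(j < size s) nth 0 s j * b ^ j].

Definition antipalindromic (b x : nat) : Prop :=
  exists s : seq nat, base_expansion b x s /\
    forall j : nat, j < size s ->
      nth 0 s j = b - 1 - nth 0 s ((size s).-1 - j).

(** With [c_j = m^k * 'C(k, j)] and [k] odd, the binomial theorem gives
    [(m (b - 1))^k = \sum_(j <= k) (-1)^(j+1) c_j b^j].  When every [c_j] lies
    in [[1, b]], borrowing one unit from each positive term turns this signed
    expansion into the base-[b] digits [c_j - 1] (odd [j]) and [b - c_j]
    (even [j]).  Since [c_(k-j) = c_j] and [j], [k - j] have opposite parities,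
    digits in mirror positions add up to [b - 1].  The largest [c_j] is the
    central one, [m^k * 'C(k, (k-1)/2)]. *)

From mathcomp Require Import all_boot all_algebra zify ring.
Import GRing.Theory Num.Theory.

Lemma leq_bin_succ n j : j < n - j -> 'C(n, j) <= 'C(n, j.+1).
Proof. by move=> lt_j; rewrite -(@leq_pmul2l j.+1) // mul_bin_left leq_mul2r lt_j orbT. Qed.

Lemma leq_bin_half n i : 'C(n, i) <= 'C(n, n./2).
Proof.
have half_bounds : n./2 + n./2 <= n <= (n./2 + n./2).+1.
  by have := odd_double_half n; rewrite -addnn; case: (odd n); lia.
have mono : {in [pred j | j <= n./2] &, {homo binomial n : j1 j2 / j1 <= j2}}.
  apply: homo_leq_in => [//||j1 j2 _ le_j2 ? /andP[_ lt_j2]|j _ lt_j].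
  - exact: leq_trans.
  - exact: leq_trans (ltnW lt_j2) le_j2.
  - by apply: leq_bin_succ; rewrite inE in lt_j; lia.
have [le_i_half|lt_half_i] := leqP i n./2; first by apply: mono; rewrite ?inE ?leqnn.
have [le_i_n|lt_n_i] := leqP i n; last by rewrite bin_small.
by rewrite -bin_sub //; apply: mono; rewrite ?inE ?leqnn; lia.
Qed.

Lemma antipalindromic_digits b l (d : nat -> nat) :
  0 < d l -> (forall j, j <= l -> d j + d (l - j) = b.-1) ->
  antipalindromic b (\sum_(j < l.+1) d j * b ^ j).
Proof.
move=> d_l_gt0 d_mirror.
have d_lt_b j : j <= l -> d j < b.
  by move=> le_jl; have := d_mirror l (leqnn l); have := d_mirror j le_jl; lia.
exists (mkseq d l.+1); split; last first.
  move=> j; rewrite size_mkseq ltnS => le_jl.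
  rewrite !nth_mkseq ?ltnS ?leq_subr //.
  by have := d_mirror j le_jl; rewrite -subn1 /=; lia.
split; rewrite ?size_mkseq //.
- apply/allP=> a /mapP[j]; rewrite mem_iota add0n ltnS => /andP[_ le_jl] ->.
  exact: d_lt_b.
- by rewrite nth_mkseq // -lt0n.
- by apply: eq_bigr => j _; rewrite nth_mkseq.
Qed.

Local Open Scope ring_scope.

Lemma sum_borrows_even (R : pzRingType) (b : R) n : ~~ odd n ->
  \sum_(j < n) (if odd j then -1 else b) * b ^+ j = 0.
Proof.
move=> n_even; rewrite -[n]odd_double_half (negbTE n_even) add0n.
elim: n./2 => [|h IH]; first by rewrite big_ord0.
rewrite doubleS !big_ord_recr /= IH odd_double /= mulN1r -exprS.
by rewrite add0r subrr.
Qed.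

Lemma exprB1n_odd (R : comPzRingType) (x : R) k : odd k ->
  (x - 1) ^+ k = \sum_(i < k.+1) (-1) ^+ i.+1 * x ^+ i *+ 'C(k, i).
Proof.
move=> k_odd; rewrite -opprB exprNn -signr_odd k_odd mulN1r exprBn -sumrN.
by apply: eq_bigr => i _; rewrite expr1n mulr1 -mulNrn exprS mulN1r mulNr.
Qed.

Lemma antipalindromic_signed_expansion b k (c : nat -> nat) (x : nat) :
  odd k -> (forall j, j <= k -> 0 < c j <= b)%N ->
  (forall j, j <= k -> c (k - j) = c j)%N -> (1 < c k)%N ->
  x%:R = \sum_(j < k.+1) (-1) ^+ j.+1 * (c j)%:R * b%:R ^+ j :> int ->
  antipalindromic b x.
Proof.
move=> k_odd c_bounds c_mirror c_k_gt1 x_signed.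
pose d j := if odd j then (c j - 1)%N else (b - c j)%N.
have d_int j : (j <= k)%N -> (d j)%:R = (-1) ^+ j.+1 * (c j)%:R
                                  + (if odd j then -1 else b%:R) :> int.
  move=> le_jk; have /andP[c_gt0 c_le_b] := c_bounds j le_jk.
  rewrite /d exprS -signr_odd; case: (odd j); rewrite ?expr0 ?expr1 natrB //; ring.
suff -> : x = (\sum_(j < k.+1) d j * b ^ j)%N.
  apply: antipalindromic_digits => [|j le_jk]; first by rewrite /d k_odd; lia.
  have := c_bounds j le_jk; rewrite /d oddB // k_odd c_mirror //.
  by case: (odd j) => /=; lia.
apply/eqP; rewrite -(eqr_nat int) natr_sum x_signed; apply/eqP.
under [RHS]eq_bigr => j _ do rewrite natrM natrX (d_int j (ltn_ord j)) mulrDl.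
by rewrite big_split /= sum_borrows_even ?addr0 //= negbK.
Qed.

Local Close Scope ring_scope.

Lemma half_pred_odd k : odd k -> k.-1./2 = k./2.
Proof. by move=> k_odd; rewrite -odd_halfK // doubleK. Qed.

Theorem mainTheorem12 (m k : nat) (hm : 1 < m) (hk1 : 1 < k) (hkodd : odd k) :
  (exists c : nat, forall b : nat, 2 <= b -> c <= b ->
     antipalindromic b ((m * (b - 1)) ^ k)) /\
  (forall b : nat, 2 <= b -> 'C(k, k.-1./2) * m ^ k <= b ->
     antipalindromic b ((m * (b - 1)) ^ k)).
Proof.
suff bound : forall b, 2 <= b -> 'C(k, k.-1./2) * m ^ k <= b ->
    antipalindromic b ((m * (b - 1)) ^ k).
  by split; first exists ('C(k, k.-1./2) * m ^ k).
move=> b b_ge2; rewrite half_pred_odd // => central_le_b.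
apply: (@antipalindromic_signed_expansion b k (fun j => m ^ k * 'C(k, j)) _ hkodd).
- move=> j le_jk; rewrite muln_gt0 expn_gt0 bin_gt0 le_jk (ltnW hm) /=.
  by apply: leq_trans central_le_b; rewrite mulnC leq_mul2r leq_bin_half orbT.
- by move=> j le_jk; rewrite bin_sub.
- by rewrite binn muln1 (@leq_trans m) // -{1}[m]expn1 leq_pexp2l // ltnW.
rewrite natrX natrM natrB ?(ltnW b_ge2) // exprMn exprB1n_odd // mulr_sumr.
by apply: eq_bigr => j _; rewrite natrM natrX -mulrnAr -mulr_natr; ring.
Qed.
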